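(* Let $G$ be a finite connected graph, $T_0$ a spanning tree of $G$, $N=|E(G-T_0)|$, with edges of $E(G-T_0)$ listed $e_1,\dots,e_N$. Then the characteristic polynomial of the mesh matrix is $$\det(X\,Id-Mesh(G,T_0))=X^N+\sum_{j=1}^N(-1)^j\,b_j\,X^{N-j},$$ where $b_j$ is the sum, over all choices of indices $1\le k_1<k_2<\dots<k_j\le N$, of the number of spanning trees of the subgraph $T_0\cup e_{k_1}\cup\dots\cup e_{k_j}$.
   Context: Orient all edges of $G$; let $\vec e_j$ go from $P_j$ to $Q_j$. Set $D(\vec e_j)=0$ if $e_j$ is a loop, and otherwise let $D(\vec e_j)$ be the 1-chain of the unique simple path in $T_0$ from $Q_j$ to $P_j$ (edges oriented along the path). Let $Z[j]=\vec e_j+D(\vec e_j)$. The mesh matrix is $Mesh(G,T_0)=(\langle Z[i],Z[j]\rangle)_{1\le i,j\le N}$, where $\langle\cdot,\cdot\rangle$ is the inner product on 1-chains with the oriented edges orthonormal. *)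

From mathcomp Require Import all_boot all_order all_algebra.
From mathcomp Require Import boolp.
Set Implicit Arguments. Unset Strict Implicit. Unset Printing Implicit Defensive.
Import GRing.Theory.
Local Open Scope ring_scope.

(* A finite multigraph (loops and parallel edges allowed): vertex type V,
   edge type E, each edge e oriented from [src e] (= P) to [tgt e] (= Q).
   Subgraphs are given by edge sets [F : {set E}] and always contain all
   vertices of V. *)
Section Graph.
Variables (V E : finType) (src tgt : E -> V).

Definition joins (e : E) (u w : V) : bool :=
  ((src e == u) && (tgt e == w)) || ((src e == w) && (tgt e == u)).

Fixpoint walk (F : {set E}) (u : V) (p : seq (E * V)) : bool :=
  if p is (e, w) :: q then [&& e \in F, joins e u w & walk F w q] else true.

Definition walk_end (u : V) (p : seq (E * V)) : V := last u (map snd p).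

Definition connectedP (F : {set E}) : Prop :=
  forall u w : V, exists p, walk F u p /\ walk_end u p = w.

(* a cycle in (V, F): a nonempty closed walk at u with pairwise distinct
   edges and pairwise distinct vertices (u counted once) *)
Definition is_cycle (F : {set E}) (u : V) (p : seq (E * V)) : Prop :=
  [/\ p != [::], walk F u p, walk_end u p = u,
      uniq (map fst p) & uniq (map snd p)].

Definition acyclicP (F : {set E}) : Prop := forall u p, ~ is_cycle F u p.

Definition spanning_tree_of (S T : {set E}) : Prop :=
  [/\ T \subset S, connectedP T & acyclicP T].

Definition spanning_tree (T : {set E}) : Prop := spanning_tree_of setT T.

Definition num_spanning_trees (S : {set E}) : nat :=
  #|[set T : {set E} | `[< spanning_tree_of S T >] ]|.

Definition simple_path (F : {set E}) (u w : V) (p : seq (E * V)) : Prop :=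
  [/\ walk F u p, walk_end u p = w & uniq (u :: map snd p)].

Fixpoint chain_of (u : V) (p : seq (E * V)) (t : E) : int :=
  if p is (e, w) :: q then
    (if e == t then (if (src e == u) && (tgt e == w) then 1 else -1) else 0)
    + chain_of w q t
  else 0.

Definition chain_dot (c d : E -> int) : int := \sum_(t : E) c t * d t.

(* Z[e] = e + D(e), where [path e] is the simple tree path from Q to P
   (D(e) = 0 when e is a loop) *)
Definition Zchain (path : E -> seq (E * V)) (e : E) : E -> int :=
  fun t => (t == e)%:R + (if src e == tgt e then 0 else chain_of (tgt e) (path e) t).

Definition Mesh (N : nat) (enumE : 'I_N -> E) (path : E -> seq (E * V))
  : 'M[int]_N :=
  \matrix_(i, j) chain_dot (Zchain path (enumE i)) (Zchain path (enumE j)).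

Definition bcoef (N : nat) (T0 : {set E}) (enumE : 'I_N -> E) (j : nat) : nat :=
  \sum_(K : {set 'I_N} | #|K| == j) num_spanning_trees (T0 :|: enumE @: K).

End Graph.

From mathcomp Require Import all_boot all_order all_algebra.
From mathcomp Require Import boolp perm.
Import GRing.Theory Num.Theory.
Local Open Scope ring_scope.

Set Implicit Arguments. Unset Strict Implicit. Unset Printing Implicit Defensive.

(* The coefficient of X^(N-j) in det(X - M) is (-1)^j times the sum of the
   principal j x j minors of M, so it suffices to show that the principal
   minor of Mesh = Z^T Z on a set K of non-tree edges counts the spanning
   trees of SK = T0 + e_K.  By Cauchy-Binet this minor is the sum of the
   squares of the |K| x |K| minors of the columns Z[k], k in K.  These
   columns span the integral cycles supported on SK, so a minor with row set
   S is +-1 when SK \ S is a spanning tree T of SK (the fundamental cycles of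
   T provide the inverse matrix), and 0 otherwise: a cycle in SK \ S gives a
   vector in the kernel, and a vertex set cut off in SK \ S one in the
   cokernel. *)

Section PrincipalMinors.
Variable R : comNzRingType.

(* [\det (pminor_mx P M)] is the principal minor of [M] on the rows and
   columns in [P]. *)
Definition pminor_mx n (P : {set 'I_n}) (M : 'M[R]_n) : 'M[R]_n :=
  \matrix_(i, j) if (i \in P) && (j \in P) then M i j else (i == j)%:R.

Lemma prod_pminor_mx_perm n (P : {set 'I_n}) (M : 'M[R]_n) (s : 'S_n) :
  \prod_i pminor_mx P M i (s i) =
  \prod_i (if i \in P then M i (s i) else (i == s i)%:R).
Proof.
have [fixP | ] := boolP [forall i in ~: P, s i == i].
  apply: eq_bigr => i _; rewrite mxE; have [iP|//] := boolP (i \in P).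
  have [//|siP] := boolP (s i \in P).
  have si_i : s (s i) = s i by apply/eqP/(forall_inP fixP); rewrite inE.
  by rewrite (perm_inj si_i) iP in siP.
(* both products vanish at a moved point outside [P] *)
rewrite negb_forall_in => /existsP[i /andP[iP si_i]].
rewrite inE in iP; rewrite (bigD1 i) // [RHS](bigD1 i) //= mxE (negbTE iP) /=.
by rewrite eq_sym (negbTE si_i) !mul0r.
Qed.

Lemma det_add_diag n (M : 'M[R]_n) (d : 'I_n -> R) :
  \det (\matrix_(i, j) (M i j + (i == j)%:R * d i)) =
  \sum_(P : {set 'I_n}) (\prod_(i in ~: P) d i) * \det (pminor_mx P M).
Proof.
rewrite /determinant.
under eq_bigr => s _.
  rewrite (eq_bigr (fun i => M i (s i) + (i == s i)%:R * d i)); last first.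
    by move=> i _; rewrite mxE.
  rewrite bigA_distr mulr_sumr.
  over.
rewrite exchange_big /=; apply: eq_bigr => P _; rewrite mulr_sumr.
apply: eq_bigr => s _; rewrite prod_pminor_mx_perm mulrCA; congr (_ * _).
rewrite !(bigID (mem P) xpredT) /= mulrCA; congr (_ * _).
  by apply: eq_bigr => i ->.
rewrite (eq_bigr (fun i => (i == s i)%:R * d i)) => [|i iP]; last by rewrite (negbTE iP).
rewrite big_split mulrC /=; congr (_ * _); last by apply: eq_bigl => i; rewrite inE.
by apply: eq_bigr => i iP; rewrite (negbTE iP).
Qed.

End PrincipalMinors.

Lemma char_poly_principal_minors (R : comNzRingType) n (M : 'M[R]_n) :
  char_poly M =
  \sum_(P : {set 'I_n}) 'X^(n - #|P|) * ((-1) ^+ #|P| * (\det (pminor_mx P M))%:P).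
Proof.
rewrite /char_poly; have -> : char_poly_mx M =
    \matrix_(i, j) (map_mx (fun x => - x%:P) M i j + (i == j)%:R * 'X).
  by apply/matrixP => i j; rewrite !mxE mulr_natl addrC.
rewrite (det_add_diag _ (fun=> 'X : {poly R})); apply: eq_bigr => P _; congr (_ * _).
  by rewrite prodr_const -(addKn #|P| #|~: P|) cardsC card_ord.
have -> : pminor_mx P (map_mx (fun x => - x%:P) M) =
    diag_mx (\row_i (if i \in P then -1 else 1)) *m map_mx polyC (pminor_mx P M).
  apply/matrixP => i j; rewrite mul_diag_mx !mxE.
  case: (boolP (i \in P)) => iP; case: (boolP (j \in P)) => jP /=;
    rewrite ?mulN1r ?mul1r //; try by case: (i == j); rewrite ?polyC1 ?polyC0 ?oppr0.
  have /negbTE -> : i != j by apply: contraNneq jP => <-.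
  by rewrite polyC0 oppr0.
rewrite det_mulmx det_diag det_map_mx; congr (_ * _).
rewrite (bigID (mem P)) /= (eq_bigr (fun _ => -1)) => [|i iP]; last by rewrite mxE iP.
by rewrite prodr_const big1 ?mulr1 // => i /negbTE iP; rewrite mxE iP.
Qed.

Section CauchyBinet.
Variables (R : comNzRingType) (S : finType) (n : nat).

Lemma det_sum_ffun (A B : S -> 'I_n -> R) :
  \det (\matrix_(j, k) \sum_x A x j * B x k) =
  \sum_(g : {ffun 'I_n -> S}) (\prod_j A (g j) j) * \det (\matrix_(j, k) B (g j) k).
Proof.
rewrite /determinant.
transitivity (\sum_(s : 'S_n) \sum_(g : {ffun 'I_n -> S})
   (-1) ^+ s * ((\prod_j A (g j) j) * \prod_j B (g j) (s j))).
  apply: eq_bigr => s _; rewrite -mulr_sumr; congr (_ * _).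
  rewrite (eq_bigr (fun j => \sum_x A x j * B x (s j))) => [|j _]; last by rewrite mxE.
  by rewrite bigA_distr_bigA; apply: eq_bigr => g _; rewrite big_split.
rewrite exchange_big; apply: eq_bigr => g _; rewrite mulr_sumr; apply: eq_bigr => s _.
by rewrite mulrCA; congr (_ * (_ * _)); apply: eq_bigr => j _; rewrite mxE.
Qed.

(* Cauchy-Binet, summed over all maps [g] rather than over row subsets: each
   [n]-subset is the image of [n`!] injective maps, and non-injective maps
   contribute nothing. *)
Lemma cauchy_binet_ffun (A B : S -> 'I_n -> R) :
  n`!%:R * \det (\matrix_(j, k) \sum_x A x j * B x k) =
  \sum_(g : {ffun 'I_n -> S})
    \det (\matrix_(j, k) A (g j) k) * \det (\matrix_(j, k) B (g j) k).
Proof.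
pose T g := (\prod_j A (g j) j) * \det (\matrix_(j, k) B (g j) k).
pose gs (s : 'S_n) (g : {ffun 'I_n -> S}) := [ffun j => g (s j)].
have gs_inj s : injective (gs s).
  move=> g1 g2 /ffunP e; apply/ffunP => j.
  by have := e (s^-1 j)%g; rewrite !ffunE permKV.
rewrite det_sum_ffun -card_Sn mulr_natl -sumr_const.
transitivity (\sum_(s : 'S_n) \sum_(g : {ffun 'I_n -> S}) T (gs s g)).
  by apply: eq_bigr => s _; apply: (reindex_inj (gs_inj s)).
rewrite exchange_big; apply: eq_bigr => g _.
transitivity (\sum_(s : 'S_n) ((-1) ^+ s * \prod_j A (g (s j)) j) *
                \det (\matrix_(j, k) B (g j) k)).
  apply: eq_bigr => s _; rewrite /T.
  have -> : \matrix_(j, k) B (gs s g j) k = row_perm s (\matrix_(j, k) B (g j) k).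
    by apply/matrixP => j k; rewrite !mxE ffunE.
  rewrite row_permE det_mulmx det_perm mulrCA mulrA; congr (_ * _ * _).
  by apply: eq_bigr => j _; rewrite ffunE.
rewrite -mulr_suml -[\det (\matrix_(j, k) A (g j) k)]det_tr; congr (_ * _).
apply: eq_bigr => s _.
by congr (_ * _); apply: eq_bigr => j _; rewrite !mxE.
Qed.

Lemma inj_card_imset_ord (g : 'I_n -> S) : #|g @: [set: 'I_n]| = n -> injective g.
Proof.
move=> card_g; have /imset_injP g_inj : #|g @: [set: 'I_n]| == #|[set: 'I_n]|.
  by rewrite card_g cardsT card_ord.
by move=> j1 j2; apply: g_inj; rewrite inE.
Qed.

Lemma card_ffun_image (I : {set S}) : #|I| = n ->
  #|[set g : {ffun 'I_n -> S} | g @: [set: 'I_n] == I]| = n`!.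
Proof.
move=> cardI.
transitivity #|[set f : {ffun 'I_n -> S} in ffun_on (mem I) | injectiveb f]|.
  apply: eq_card => g; rewrite !inE.
  apply/eqP/andP => [gI | [/ffun_onP gI /injectiveP g_inj]].
    split; first by apply/ffun_onP => j; rewrite -gI imset_f ?inE.
    by apply/injectiveP/inj_card_imset_ord; rewrite gI.
  apply/eqP; rewrite eqEcard; apply/andP; split.
    by apply/subsetP => _ /imsetP[j _ ->]; apply: gI.
  by rewrite card_imset // cardsT card_ord cardI.
by rewrite card_inj_ffuns_on card_ord -ffactnn -{2}cardI.
Qed.

End CauchyBinet.

Section Determinants.
Variable R : idomainType.

Lemma det_row_eq0 n (A : 'M[R]_n) j : (forall k, A j k = 0) -> \det A = 0.
Proof. by move=> A0; rewrite (expand_det_row _ j) big1 // => k _; rewrite A0 mul0r. Qed.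

Lemma det_col_eq0 n (A : 'M[R]_n) k : (forall j, A j k = 0) -> \det A = 0.
Proof. by move=> A0; rewrite (expand_det_col _ k) big1 // => j _; rewrite A0 mul0r. Qed.

Lemma det_lker_eq0 n (A : 'M[R]_n) (z : 'I_n -> R) i0 :
  z i0 != 0 -> (forall k, \sum_j z j * A j k = 0) -> \det A = 0.
Proof.
move=> zi0 zA; apply/eqP/det0P; exists (\row_j z j).
  by apply: contra_neq zi0 => /rowP /(_ i0); rewrite !mxE.
by apply/rowP => k; rewrite !mxE -[RHS](zA k); apply: eq_bigr => j _; rewrite mxE.
Qed.

Lemma det_rker_eq0 n (A : 'M[R]_n) (x : 'I_n -> R) i0 :
  x i0 != 0 -> (forall j, \sum_k A j k * x k = 0) -> \det A = 0.
Proof.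
move=> xi0 Ax; rewrite -det_tr; apply: (det_lker_eq0 xi0) => j.
by rewrite -[RHS](Ax j); apply: eq_bigr => k _; rewrite mxE mulrC.
Qed.

End Determinants.

Lemma det_sqr_eq1_int n (A B : 'M[int]_n) : A *m B = 1%:M -> \det A ^+ 2 = 1.
Proof.
move=> /mulmx1_unit[+ _]; rewrite unitmxE qualifE => /orP[] /eqP ->; by [].
Qed.

Section Chains.
Variables (V E : finType) (src tgt : E -> V).
Implicit Types (F S T : {set E}) (R : {set V}) (u v w x : V) (p q : seq (E * V)).
Implicit Types (e f s : E) (c y : E -> int).

Local Notation walk := (walk src tgt).
Local Notation joins := (joins src tgt).
Local Notation chain_of := (chain_of src tgt).

Definition incidence v e : int := (tgt e == v)%:R - (src e == v)%:R.

Definition closed_chain c : Prop := forall v, \sum_e incidence v e * c e = 0.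

Lemma walk_cat F u p q :
  walk F u (p ++ q) = walk F u p && walk F (walk_end u p) q.
Proof. by elim: p u => [|[e w] p IH] u //=; rewrite IH !andbA. Qed.

Lemma walk_end_cat u p q : walk_end u (p ++ q) = walk_end (walk_end u p) q.
Proof. by rewrite /walk_end map_cat last_cat. Qed.

Lemma walk_subset F F' u p : F \subset F' -> walk F u p -> walk F' u p.
Proof.
move=> sFF'; elim: p u => [|[e w] p IH] u //= /and3P[eF j wp].
by rewrite (subsetP sFF' _ eF) j IH.
Qed.

Lemma walk_edge_in F u p e : walk F u p -> e \in map fst p -> e \in F.
Proof.
elim: p u => [|[f w] p IH] u //= /and3P[fF _ wp].
by rewrite inE => /orP[/eqP-> // | ep]; apply: IH wp ep.
Qed.

Lemma chain_of_notin u p e : e \notin map fst p -> chain_of u p e = 0.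
Proof.
elim: p u => [|[f w] p IH] u //=.
by rewrite inE negb_or eq_sym => /andP[/negbTE-> ep]; rewrite IH.
Qed.

Lemma chain_of_out F u p e : walk F u p -> e \notin F -> chain_of u p e = 0.
Proof. by move=> wp eF; apply/chain_of_notin/(contra (walk_edge_in wp)). Qed.

Lemma incidence_joins e u w v : joins e u w ->
  incidence v e * (if (src e == u) && (tgt e == w) then 1 else -1) =
  (w == v)%:R - (u == v)%:R.
Proof.
rewrite /joins /incidence => /orP[/andP[/eqP-> /eqP->] | /andP[/eqP-> /eqP->]].
  by rewrite !eqxx mulr1.
by have [-> | ne] := eqVneq w u; rewrite ?mulr1 // mulrN1 opprB.
Qed.

Lemma boundary_chain_of F u p v : walk F u p ->
  \sum_e incidence v e * chain_of u p e = (walk_end u p == v)%:R - (u == v)%:R.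
Proof.
elim: p u => [|[e w] p IH] u /=.
  by move=> _; rewrite big1 ?subrr // => e _; rewrite mulr0.
case/and3P => _ j wp; under eq_bigr => t _ do rewrite mulrDr.
rewrite big_split /= IH // (bigD1 e) //= eqxx big1 ?addr0; last first.
  by move=> t /negbTE te; rewrite eq_sym te mulr0.
by rewrite incidence_joins // addrC addrA subrK.
Qed.

Lemma closed_chain_edge_walk F e p :
  walk F (tgt e) p -> walk_end (tgt e) p = src e ->
  closed_chain (fun t => (t == e)%:R + chain_of (tgt e) p t).
Proof.
move=> wp ep v; under eq_bigr => t _ do rewrite mulrDr.
rewrite big_split /= (boundary_chain_of v wp) ep (bigD1 e) //= eqxx mulr1.
rewrite big1 => [|t /negbTE->]; last by rewrite mulr0.
by rewrite addr0 /incidence addrC addrA subrK subrr.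
Qed.

Lemma joins_ends e u w x : joins e u w ->
  (x == src e) || (x == tgt e) = (x == u) || (x == w).
Proof. by rewrite /joins => /orP[] /andP[/eqP-> /eqP->] //; rewrite orbC. Qed.

Lemma walk_mem_endpoint F w q e : walk F w q -> e \in map fst q ->
  exists2 x, x \in map snd q & (x == src e) || (x == tgt e).
Proof.
elim: q w => [|[f x] q IH] w //= /and3P[_ j wq].
rewrite inE => /orP[/eqP-> | eq].
  by exists x; rewrite ?inE ?eqxx // (joins_ends x j) eqxx orbT.
by have [y yq ye] := IH _ wq eq; exists y => //; rewrite inE yq orbT.
Qed.

Lemma simple_path_uniq_edges F u w p :
  simple_path src tgt F u w p -> uniq (map fst p).
Proof.
case=> + _; elim: p u => [|[e x] p IH] u //= /and3P[_ j wp].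
rewrite inE negb_or => /andP[/andP[_ up] /andP[xp ux]].
rewrite (IH x) ?andbT /= ?xp ?ux //; apply/negP => ep.
have [y yp] := walk_mem_endpoint wp ep.
by rewrite (joins_ends y j) => /orP[] /eqP ey; rewrite ey ?(negbTE up) ?(negbTE xp) in yp.
Qed.

Lemma walk_shorten F u p : walk F u p ->
  exists q, simple_path src tgt F u (walk_end u p) q.
Proof.
elim: p u => [|[e w] p IH] u /=; first by exists [::].
case/and3P => eF j wp; have [q [wq eq uq]] := IH _ wp.
have [uq' | /negbTE uq'] := boolP (u \in w :: map snd q); last first.
  by exists ((e, w) :: q); split; rewrite //= ?eF ?j ?uq'.
move: uq'; rewrite inE => /orP[/eqP-> | /mapP[[e' u'] inq /= uu']].
  by exists q.
(* [u] reappears on the simple path [q]: keep only the part after it *)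
case/splitPr: inq wq eq uq => q1 q2; rewrite -uu' -cat_rcons.
rewrite walk_cat /walk_end !map_cat last_cat map_rcons last_rcons.
case/andP => _ wq2 eq2; rewrite cat_rcons -cat_cons cat_uniq => /and3P[_ _ uq2].
by exists q2; split; [| exact: eq2 |].
Qed.

Definition reach F u : {set V} :=
  [set w | `[< exists p, walk F u p /\ walk_end u p = w >] ].

Lemma reach_refl F u : u \in reach F u.
Proof. by rewrite inE; apply/asboolP; exists [::]. Qed.

Lemma reach_step F u w e x :
  w \in reach F u -> e \in F -> joins e w x -> x \in reach F u.
Proof.
rewrite !inE => /asboolP[p [wp ep]] eF j; apply/asboolP.
exists (p ++ [:: (e, x)]); rewrite walk_cat walk_end_cat ep /=.
by rewrite wp eF j.
Qed.

Lemma reach_closed F u e : e \in F -> (src e \in reach F u) = (tgt e \in reach F u).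
Proof.
move=> eF; apply/idP/idP => h; apply: (reach_step h eF);
  by rewrite /joins !eqxx ?orbT.
Qed.

Lemma walk_crossing_edge F R x p : walk F x p -> x \in R -> walk_end x p \notin R ->
  exists2 e, e \in F & (src e \in R) != (tgt e \in R).
Proof.
elim: p x => [|[e w] p IH] x /=; first by move=> _ ->.
case/and3P => eF j wp xR wR; have [wR' | wR'] := boolP (w \in R).
  exact: IH wp wR' wR.
exists e => //; move: j; rewrite /joins.
by case/orP => /andP[/eqP-> /eqP->]; rewrite xR (negbTE wR').
Qed.

Lemma sum_incidence R e :
  \sum_(v in R) incidence v e = (tgt e \in R)%:R - (src e \in R)%:R.
Proof.
have sum_eq x : \sum_(v in R) ((x == v)%:R : int) = (x \in R)%:R.
  rewrite big_mkcond (bigD1 x) //= eqxx big1 ?addr0; first by case: (x \in R).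
  by move=> v /negbTE xv; rewrite eq_sym xv; case: (v \in R).
by rewrite sumrB !sum_eq.
Qed.

Lemma sum_coboundary_closed R y : closed_chain y ->
  \sum_e ((tgt e \in R)%:R - (src e \in R)%:R) * y e = 0.
Proof.
move=> yc; under eq_bigr => e _ do rewrite -sum_incidence mulr_suml.
by rewrite exchange_big big1 // => v _; apply: yc.
Qed.

Lemma acyclic_bridge F f : acyclicP src tgt F -> f \in F ->
  src f \notin reach (F :\ f) (tgt f).
Proof.
move=> acF fF; apply/negP; rewrite inE => /asboolP[p [wp ep]].
have [q [wq eq uq]] := walk_shorten wp.
apply: (acF (src f) ((f, tgt f) :: q)); split => //=.
- by rewrite fF /joins !eqxx (walk_subset (subD1set F f) wq).
- by rewrite /walk_end /= -ep.
- rewrite (simple_path_uniq_edges (And3 wq eq uq)) andbT.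
  by apply: contraT => /negPn /(walk_edge_in wq); rewrite !inE eqxx.
Qed.

Lemma closed_chain_acyclic_eq0 F y : acyclicP src tgt F -> closed_chain y ->
  (forall e, e \notin F -> y e = 0) -> forall e, y e = 0.
Proof.
move=> acF yc yF f; apply/eqP/negPn/negP => yf.
have fF : f \in F by apply: contraNT yf => /yF->.
pose R := reach (F :\ f) (tgt f).
have := sum_coboundary_closed R yc; rewrite (bigD1 f) //= big1 ?addr0.
  rewrite (negbTE (acyclic_bridge acF fF)) reach_refl subr0 mul1r => /eqP.
  by rewrite (negbTE yf).
move=> e ef; have [eF | /yF->] := boolP (e \in F); last by rewrite mulr0.
by rewrite (@reach_closed (F :\ f)) ?subrr ?mul0r // !inE ef.
Qed.

Lemma closed_chain_cycle F u p : is_cycle src tgt F u p ->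
  [/\ closed_chain (chain_of u p), forall e, e \notin F -> chain_of u p e = 0
    & exists e, chain_of u p e != 0].
Proof.
case=> pn wp ep ue _; split.
- by move=> v; rewrite (boundary_chain_of v wp) ep subrr.
- by move=> e; apply: chain_of_out wp.
case: p pn wp ep ue => [//|[f w] q] _ _ _ /= /andP[fq _].
by exists f; rewrite eqxx (chain_of_notin _ fq) addr0; case: ifP.
Qed.

Lemma fundamental_cycles F : connectedP src tgt F ->
  exists C : E -> E -> int, (forall s, closed_chain (C s)) /\
    forall s e, e \notin F -> C s e = (e == s)%:R.
Proof.
move=> Fc; suff /choice[C HC] : forall s, exists c : E -> int,
    closed_chain c /\ forall e, e \notin F -> c e = (e == s)%:R.
  by exists C; split=> [s | s]; case: (HC s).
move=> s; have [p [wp ep]] := Fc (tgt s) (src s).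
exists (fun e => (e == s)%:R + chain_of (tgt s) p e).
split=> [|e eF]; first exact: closed_chain_edge_walk wp ep.
by rewrite (chain_of_out wp eF) addr0.
Qed.

(* The difference of the two sides is a cycle supported on the forest [T]. *)
Lemma closed_chain_expansion T S (I : finType) (f : I -> E) (C : I -> E -> int) y :
  acyclicP src tgt T -> injective f ->
  (forall i, closed_chain (C i)) -> (forall i e, e \notin T -> C i e = (e == f i)%:R) ->
  (forall e, e \in S -> e \notin T -> exists i, f i = e) ->
  closed_chain y -> (forall e, e \notin S -> y e = 0) ->
  forall e, y e = \sum_(i | f i \in S :\: T) C i e * y (f i).
Proof.
move=> acT f_inj Cc CT Scov yc yS e; apply/eqP; rewrite -subr_eq0; apply/eqP.
move: e; apply: (closed_chain_acyclic_eq0 acT) => [v | e eT].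
  under eq_bigr => e _ do rewrite mulrBr mulr_sumr.
  rewrite sumrB yc exchange_big big1 ?subrr // => i _.
  under eq_bigr => e _ do rewrite mulrA.
  by rewrite -mulr_suml Cc mul0r.
under eq_bigr => i _ do rewrite CT //.
have [eS | eS] := boolP (e \in S); last first.
  rewrite yS // sub0r big1 ?oppr0 // => i; rewrite inE => /andP[_ fiS].
  have /negbTE-> : e != f i by apply: contraNneq eS => ->.
  by rewrite mul0r.
have [i0 ei0] := Scov e eS eT; rewrite -ei0 in eS eT *.
rewrite (bigD1 i0) ?inE ?eS ?eT //= eqxx mul1r big1 ?addr0 ?subrr //.
by move=> i /andP[_ ne]; rewrite (inj_eq f_inj) eq_sym (negbTE ne) mul0r.
Qed.

End Chains.

Section MeshMinors.
Variables (V E : finType) (src tgt : E -> V) (T0 : {set E}) (N : nat)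
  (eK : 'I_N -> E) (path : E -> seq (E * V)).
Hypotheses (T0_tree : spanning_tree src tgt T0) (eK_inj : injective eK)
  (eK_cover : forall e : E, e \notin T0 <-> exists k : 'I_N, eK k = e)
  (path_simple : forall k : 'I_N, src (eK k) != tgt (eK k) ->
     simple_path src tgt T0 (tgt (eK k)) (src (eK k)) (path (eK k))).

Local Notation closed_chain := (closed_chain src tgt).
Implicit Types (e s : E) (k : 'I_N) (y : E -> int) (T : {set E}).

(* The |E| x N matrix with columns Z[k], so that Mesh = Z^T Z. *)
Definition Z e k : int := Zchain src tgt path (eK k) e.

Lemma eK_notin_T0 k : eK k \notin T0.
Proof. by apply/eK_cover; exists k. Qed.

Lemma Z_closed k : closed_chain (Z^~ k).
Proof.
have [loop | nloop] := eqVneq (src (eK k)) (tgt (eK k)).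
  have := closed_chain_edge_walk (F := T0) (p := [::]) isT (esym loop).
  by rewrite /Z /Zchain loop eqxx.
have [wp ep _] := path_simple nloop.
by rewrite /Z /Zchain (negbTE nloop); apply: closed_chain_edge_walk wp ep.
Qed.

Lemma Z_out e k : e \notin T0 -> Z e k = (e == eK k)%:R.
Proof.
move=> eT; rewrite /Z /Zchain; case: ifP => [_ | /negbT nloop]; first by rewrite addr0.
by have [wp _ _] := path_simple nloop; rewrite (chain_of_out wp eT) addr0.
Qed.

Variable K : {set 'I_N}.

Definition SK : {set E} := T0 :|: eK @: K.

Lemma eK_in_SK_T0 k : (eK k \in SK :\: T0) = (k \in K).
Proof.
by rewrite /SK !inE eK_notin_T0 (negbTE (eK_notin_T0 k)) (mem_imset _ _ eK_inj).
Qed.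

Lemma Z_out_SK e k : e \notin SK -> k \in K -> Z e k = 0.
Proof.
rewrite /SK !inE negb_or => /andP[eT eKK] kK; rewrite Z_out //.
by case: eqP => // ek; rewrite ek imset_f in eKK.
Qed.

Lemma Z_expansion_SK y : closed_chain y -> (forall e, e \notin SK -> y e = 0) ->
  forall e, y e = \sum_(k in K) Z e k * y (eK k).
Proof.
have [_ _ T0_acyclic] := T0_tree; move=> yc yS e.
rewrite (closed_chain_expansion (C := fun k e => Z e k) T0_acyclic eK_inj _ _ _ yc yS e).
- by apply: eq_bigl => k; apply: eK_in_SK_T0.
- exact: Z_closed.
- by move=> k t; apply: Z_out.
- by move=> t _ /eK_cover.
Qed.

Lemma fundamental_cycle_expansion T (C : E -> E -> int) s :
  T \subset SK -> (forall s, closed_chain (C s)) ->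
  (forall s e, e \notin T -> C s e = (e == s)%:R) ->
  s \in SK :\: T -> forall e, C s e = \sum_(k in K) Z e k * C s (eK k).
Proof.
move=> TSK Cc CT; rewrite inE => /andP[sT sSK]; apply: Z_expansion_SK => // e eSK.
rewrite CT; last by apply: contra eSK; apply: subsetP.
by case: eqP => // es; rewrite es sSK in eSK.
Qed.

(* The fundamental cycles of [T] and the columns of [Z] on [K] are dual bases
   of the cycle space of [SK]; comparing traces gives the edge count. *)
Lemma card_spanning_tree_compl T :
  spanning_tree_of src tgt SK T -> #|SK :\: T| = #|K|.
Proof.
case=> TSK Tc Ta; have [C [Cc CT]] := fundamental_cycles Tc.
have Z_C k : k \in K -> forall e, Z e k = \sum_(s in SK :\: T) C s e * Z s k.
  move=> kK; apply: (closed_chain_expansion (f := id) Ta) => //.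
  - by move=> e; exists e.
  - exact: Z_closed.
  - by move=> e eSK; apply: Z_out_SK.
have : (#|SK :\: T|%:R : int) = #|K|%:R.
  rewrite -!sumr_const.
  transitivity (\sum_(s in SK :\: T) \sum_(k in K) Z s k * C s (eK k)).
    apply: eq_bigr => s sS; rewrite -(fundamental_cycle_expansion TSK Cc CT sS).
    by move: sS; rewrite inE => /andP[sT _]; rewrite CT // eqxx.
  rewrite exchange_big; apply: eq_bigr => k kK.
  under eq_bigr => s _ do rewrite mulrC.
  by rewrite -Z_C // Z_out ?eK_notin_T0 // eqxx.
by move/eqP; rewrite eqr_nat => /eqP.
Qed.

(* The columns of [Z] indexed by [K], completed by unit vectors outside [K]
   so that the Gram matrix is [pminor_mx K Mesh], of size [N]. *)
Definition Zpad (x : E + 'I_N) k : int :=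
  match x with
  | inl e => if k \in K then Z e k else 0
  | inr i => if k \in K then 0 else (i == k)%:R
  end.

Lemma pminor_Mesh :
  pminor_mx K (Mesh src tgt eK path) = \matrix_(j, k) \sum_x Zpad x j * Zpad x k.
Proof.
apply/matrixP => j k; rewrite !mxE big_sumType /=.
have [jK | jK] := boolP (j \in K); have [kK | kK] := boolP (k \in K) => /=.
- by rewrite [X in _ = _ + X]big1 ?addr0 // => i _; rewrite mulr0.
- have /negbTE-> : j != k by apply: contraNneq kK => <-.
  by rewrite !big1 ?addr0 // => ? _; rewrite ?mulr0 ?mul0r.
- have /negbTE-> : j != k by apply: contraNneq jK => ->.
  by rewrite !big1 ?addr0 // => ? _; rewrite ?mulr0 ?mul0r.
rewrite big1 ?add0r => [|e _]; last by rewrite mul0r.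
rewrite (bigD1 j) //= eqxx mul1r big1 ?addr0 // => i /negbTE ij.
by rewrite ij mul0r.
Qed.

Implicit Types (g : {ffun 'I_N -> E + 'I_N}) (j : 'I_N).

Definition rows_of g : {set E + 'I_N} := g @: [set: 'I_N].
Definition Zrows g : 'M[int]_N := \matrix_(j, k) Zpad (g j) k.
Definition row_edges g : {set E} := [set s | inl s \in rows_of g].

Definition tree_rows T : {set E + 'I_N} := inl @: (SK :\: T) :|: inr @: ~: K.

Definition spanning_trees : {set {set E}} :=
  [set T | `[< spanning_tree_of src tgt SK T >] ].

Lemma row_of_mem g j : g j \in rows_of g.
Proof. by rewrite imset_f ?inE. Qed.

Lemma inl_tree_rows T s : (inl s \in tree_rows T) = (s \in SK :\: T).
Proof.
rewrite inE (mem_imset _ _ inl_inj).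
by case: imsetP => [[i _ //] | _]; rewrite orbF.
Qed.

Lemma inr_tree_rows T i : (inr i \in tree_rows T) = (i \notin K).
Proof.
rewrite inE (mem_imset _ _ inr_inj) inE.
by case: imsetP => [[s _ //] | _].
Qed.

Lemma card_tree_rows T : T \in spanning_trees -> #|tree_rows T| = N.
Proof.
rewrite inE => /asboolP/card_spanning_tree_compl cardT.
rewrite cardsU (_ : _ :&: _ = set0); last first.
  by apply/setP => x; rewrite !inE; apply/negP => /andP[/imsetP[s _ ->] /imsetP[]].
rewrite cards0 subn0 !card_imset; [|exact: inr_inj | exact: inl_inj].
by rewrite cardT cardsC card_ord.
Qed.

Lemma tree_rows_inj : {in spanning_trees &, injective tree_rows}.
Proof.
move=> T1 T2; rewrite !inE => /asboolP[T1S _ _] /asboolP[T2S _ _] eT.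
apply/setP => s; have := inl_tree_rows T1 s; rewrite eT inl_tree_rows !in_setD.
have [sSK | sSK] := boolP (s \in SK); last first.
  by rewrite (contraNF (subsetP T1S s)) // (contraNF (subsetP T2S s)).
by rewrite !andbT => /negb_inj.
Qed.

Lemma sum_if_in (a b : 'I_N -> int) :
  \sum_k (if k \in K then a k else 0) * b k = \sum_(k in K) a k * b k.
Proof. by rewrite [RHS]big_mkcond; apply: eq_bigr => k _; case: ifP; rewrite ?mul0r. Qed.

Lemma sqr_det_Zrows_tree g T : T \in spanning_trees -> rows_of g = tree_rows T ->
  \det (Zrows g) ^+ 2 = 1.
Proof.
move=> Tt gT; have g_inj : injective g.
  by apply: inj_card_imset_ord; rewrite -/(rows_of g) gT card_tree_rows.
move: Tt; rewrite inE => /asboolP[TSK Tc _].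
have g_inl j s : g j = inl s -> s \in SK :\: T.
  by move=> gj; rewrite -inl_tree_rows -gT -gj row_of_mem.
have g_inr j i : g j = inr i -> i \notin K.
  by move=> gj; rewrite -(inr_tree_rows T) -gT -gj row_of_mem.
have [C [Cc CT]] := fundamental_cycles Tc.
pose Q : 'M[int]_N := \matrix_(k, j)
  match g j with inl s => if k \in K then C s (eK k) else 0 | inr i => (i == k)%:R end.
apply: (@det_sqr_eq1_int _ _ Q); apply/matrixP => j' j; rewrite !mxE -(inj_eq g_inj).
under eq_bigr => k _ do rewrite !mxE.
case E1: (g j') => [s'|i']; case E2: (g j) => [s|i] /=.
- rewrite (eq_bigr (fun k => (if k \in K then Z s' k else 0) * C s (eK k))).
    rewrite sum_if_in -(fundamental_cycle_expansion TSK Cc CT (g_inl _ _ E2)).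
    by move/g_inl: E1; rewrite inE => /andP[s'T _]; rewrite CT.
  by move=> k _; case: ifP; rewrite ?mul0r.
- rewrite sum_if_in big1 // => k kK; have /negbTE-> : i != k.
    by apply: contraNneq (g_inr _ _ E2) => ->.
  by rewrite mulr0.
- by rewrite big1 // => k _; case: ifP; rewrite ?mul0r ?mulr0.
- rewrite (bigD1 i') //= (negbTE (g_inr _ _ E1)) eqxx mul1r big1 ?addr0.
    by rewrite eq_sym.
  by move=> k /negbTE ki'; case: ifP; rewrite ?mul0r // eq_sym ki' mul0r.
Qed.

Lemma det_Zrows_inr g j i : g j = inr i -> i \in K -> \det (Zrows g) = 0.
Proof.
move=> gj iK; apply: (det_row_eq0 (j := j)) => k; rewrite mxE gj /=.
by case: ifP => // kK; case: eqP => // ik; rewrite -ik iK in kK.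
Qed.

Lemma det_Zrows_inl g j s : g j = inl s -> s \notin SK -> \det (Zrows g) = 0.
Proof.
move=> gj sSK; apply: (det_row_eq0 (j := j)) => k; rewrite mxE gj /=.
by case: ifP => // kK; apply: Z_out_SK.
Qed.

Lemma det_Zrows_missing g i : i \notin K -> inr i \notin rows_of g ->
  \det (Zrows g) = 0.
Proof.
move=> iK ig; apply: (det_col_eq0 (k := i)) => j; rewrite mxE.
case gj: (g j) => [s|i'] /=; rewrite (negbTE iK) //.
by case: eqP => // ii'; rewrite -ii' -gj row_of_mem in ig.
Qed.

Lemma det_Zrows_cycle g : ~ acyclicP src tgt (SK :\: row_edges g) ->
  \det (Zrows g) = 0.
Proof.
move=> nac; have [u [p cyc]] : exists u p, is_cycle src tgt (SK :\: row_edges g) u p.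
  by apply: contra_notP nac => nex u p cyc; apply: nex; exists u, p.
have [yc yF [e0 ye0]] := closed_chain_cycle cyc.
set y := chain_of src tgt u p in yc yF ye0.
have yS e : e \notin SK -> y e = 0 by move=> eSK; apply: yF; rewrite inE (negbTE eSK) andbF.
(* [y] is a nonzero combination of the columns of [Z] on [K] *)
have /exists_inP[k0 k0K yk0] : [exists k in K, y (eK k) != 0].
  apply: contraTT ye0 => /exists_inPn yK0.
  rewrite negbK (Z_expansion_SK yc yS) big1 // => k kK.
  by move/negPn/eqP: (yK0 k kK) => ->; rewrite mulr0.
apply: (det_rker_eq0 (x := fun k => if k \in K then y (eK k) else 0) (i0 := k0)).
  by rewrite k0K.
move=> j; under eq_bigr => k _ do rewrite mxE.
case gj: (g j) => [s|i] /=; last first.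
  by rewrite big1 // => k _; case: ifP; rewrite ?mul0r ?mulr0.
rewrite sum_if_in (eq_bigr (fun k => Z s k * y (eK k))) => [|k ->] //.
rewrite -(Z_expansion_SK yc yS); apply: yF.
by rewrite !inE -gj row_of_mem.
Qed.

Lemma sum_inl_rows g (a : E -> int) : injective g ->
  \sum_j (if g j is inl s then a s else 0) = \sum_(s in row_edges g) a s.
Proof.
move=> g_inj; pose h (x : E + 'I_N) := if x is inl s then a s else 0.
rewrite [RHS](eq_bigl (fun s => inl s \in rows_of g)) => [|s]; last by rewrite inE.
transitivity (\sum_(x in rows_of g) h x).
  rewrite big_imset /=; last by move=> j1 j2 _ _; apply: g_inj.
  by apply: eq_bigl => j; rewrite inE.
by rewrite big_sumType /= [X in _ + X]big1 ?addr0.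
Qed.

Lemma det_Zrows_disconnected g : injective g ->
  ~ connectedP src tgt (SK :\: row_edges g) -> \det (Zrows g) = 0.
Proof.
move=> g_inj; set F := SK :\: row_edges g => nc.
have [u [w wR]] : exists u w, w \notin reach src tgt F u.
  apply: contra_notP nc => nex u w.
  suff: w \in reach src tgt F u by rewrite inE => /asboolP.
  by apply/negPn/negP => wR; apply: nex; exists u, w.
set R := reach src tgt F u in wR.
(* a tree edge crossing the cut [R] has to be a row of [g] *)
have [_ T0c _] := T0_tree; have [p [wp ep]] := T0c u w.
have wpR : walk_end u p \notin R by rewrite ep.
have [e0 e0T0 cr] := walk_crossing_edge wp (reach_refl src tgt F u) wpR.
pose c e : int := (tgt e \in R)%:R - (src e \in R)%:R.
have cF e : e \in F -> c e = 0 by move=> eF; rewrite /c -(reach_closed src tgt u eF) subrr.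
have ce0 : c e0 != 0 by move: cr; rewrite /c; case: (src e0 \in R); case: (tgt e0 \in R).
have /imsetP[j0 _ gj0] : inl e0 \in rows_of g.
  apply: contraT => e0g; move: ce0; rewrite cF ?eqxx //.
  by rewrite /F /SK !inE (negbTE e0g) e0T0.
apply: (det_lker_eq0 (z := fun j => if g j is inl s then c s else 0) (i0 := j0)).
  by rewrite -gj0.
move=> k; rewrite (eq_bigr (fun j => if g j is inl s then c s * Zpad (inl s) k else 0)).
  rewrite sum_inl_rows //=; have [kK | kK] := boolP (k \in K); last first.
    by rewrite big1 // => s _; rewrite mulr0.
  apply: etrans (sum_coboundary_closed R (Z_closed k)).
  rewrite [RHS](bigID (mem (row_edges g))) /= [X in _ = _ + X]big1 ?addr0 // => e eg.
  have [eSK | eSK] := boolP (e \in SK); last by rewrite Z_out_SK ?mulr0.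
  by rewrite -/(c e) cF ?mul0r // inE eg.
by move=> j _; rewrite mxE; case: (g j) => // i; rewrite mul0r.
Qed.

Lemma det_Zrows_neq0_tree_rows g : \det (Zrows g) != 0 ->
  exists2 T, T \in spanning_trees & rows_of g = tree_rows T.
Proof.
move=> det_neq0; have g_inj : injective g.
  apply/injectiveP; apply: contraNT det_neq0 => /injectivePn[j1 [j2 ne e]].
  by rewrite (determinant_alternate ne) // => k; rewrite !mxE e.
have inr_K j i : g j = inr i -> i \notin K.
  by move=> gj; apply: contra det_neq0 => /(det_Zrows_inr gj)->.
have inl_SK j s : g j = inl s -> s \in SK.
  by move=> gj; apply: contraLR det_neq0 => /(det_Zrows_inl gj)->; rewrite negbK.
have inr_rows i : i \notin K -> inr i \in rows_of g.
  by move=> iK; apply: contraLR det_neq0 => /(det_Zrows_missing iK)->; rewrite negbK.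
have acyc : acyclicP src tgt (SK :\: row_edges g).
  by apply: contrapT => /det_Zrows_cycle det0; rewrite det0 eqxx in det_neq0.
have conn : connectedP src tgt (SK :\: row_edges g).
  apply: contrapT => /(det_Zrows_disconnected g_inj) det0.
  by rewrite det0 eqxx in det_neq0.
exists (SK :\: row_edges g); first by rewrite inE; apply/asboolP; split; rewrite ?subsetDl.
apply/setP => -[s | i]; last first.
  rewrite inr_tree_rows; apply/idP/idP => [/imsetP[j _ gj] | /inr_rows //].
  exact: (inr_K j i (esym gj)).
rewrite inl_tree_rows !in_setD /row_edges inE.
have [/imsetP[j _ gj] | _] := boolP (inl s \in rows_of g); last by rewrite andNb.
by rewrite (inl_SK j s (esym gj)).
Qed.

Lemma sqr_det_Zrows g :
  \det (Zrows g) ^+ 2 = \sum_(T in spanning_trees) (rows_of g == tree_rows T)%:R.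
Proof.
have [[T Tt gT] | no_tree] :=
    pselect (exists2 T, T \in spanning_trees & rows_of g = tree_rows T).
  rewrite (sqr_det_Zrows_tree Tt gT) gT (bigD1 T) //= eqxx big1 ?addr0 // => T' /andP[T't T'T].
  by case: eqP => // /(tree_rows_inj Tt T't) TT'; rewrite TT' eqxx in T'T.
rewrite big1 => [|T Tt]; last by case: eqP => // gT; case: no_tree; exists T.
have [-> | /det_Zrows_neq0_tree_rows[T Tt gT]] := eqVneq (\det (Zrows g)) 0; first exact: expr0n.
by case: no_tree; exists T.
Qed.

Lemma det_pminor_Mesh :
  \det (pminor_mx K (Mesh src tgt eK path)) = (num_spanning_trees src tgt SK)%:R.
Proof.
apply: (@mulfI _ N`!%:R); first by rewrite pnatr_eq0 -lt0n fact_gt0.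
rewrite pminor_Mesh cauchy_binet_ffun.
transitivity (\sum_g \sum_(T in spanning_trees) ((rows_of g == tree_rows T)%:R : int)).
  by apply: eq_bigr => g _; rewrite -sqr_det_Zrows expr2.
rewrite exchange_big /= [RHS]mulr_natr -[num_spanning_trees _ _ _]/#|spanning_trees|.
rewrite -sumr_const; apply: eq_bigr => T Tt.
rewrite -(card_ffun_image (card_tree_rows Tt)) -sumr_const.
by rewrite [RHS]big_mkcond; apply: eq_bigr => g _; rewrite inE; case: eqP.
Qed.

End MeshMinors.

Unset Implicit Arguments. Set Strict Implicit.

Theorem lemma3p1 (V E : finType) (src tgt : E -> V)
  (T0 : {set E}) (N : nat) (enumE : 'I_N -> E) (path : E -> seq (E * V)) :
  connectedP src tgt [set: E] ->
  spanning_tree src tgt T0 ->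
  injective enumE ->
  (forall e : E, e \notin T0 <-> exists i : 'I_N, enumE i = e) ->
  (forall i : 'I_N, src (enumE i) != tgt (enumE i) ->
     simple_path src tgt T0 (tgt (enumE i)) (src (enumE i)) (path (enumE i))) ->
  char_poly (Mesh src tgt enumE path) =
    'X^N + \sum_(1 <= j < N.+1)
             ((-1) ^+ j * ((bcoef src tgt T0 enumE j)%:R)%:P * 'X^(N - j)).
Proof.
(* connectivity of G already follows from T0 being a spanning tree *)
move=> _ T0_tree enum_inj enum_cover path_simple.
have card_ltn (P : {set 'I_N}) : (#|P| < N.+1)%N.
  by rewrite ltnS -[X in (_ <= X)%N](card_ord N) max_card.
rewrite char_poly_principal_minors.
rewrite (partition_big (fun P : {set 'I_N} => inord #|P| : 'I_N.+1) xpredT) //=.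
rewrite big_ord_recl big_add1 big_mkord /=; congr (_ + _).
  rewrite (big_pred1 set0) => [|P]; last by rewrite -val_eqE /= inordK // cards_eq0.
  rewrite cards0 subn0 expr0 mul1r (_ : pminor_mx set0 _ = 1%:M) ?det1 ?mulr1 //.
  by apply/matrixP => i j; rewrite !mxE inE.
apply: eq_bigr => j _; rewrite /bcoef natr_sum rmorph_sum mulr_sumr mulr_suml.
apply: eq_big => [P | P]; first by rewrite -val_eqE /= inordK.
rewrite -val_eqE /= inordK // => /eqP cardP.
by rewrite cardP (det_pminor_Mesh T0_tree) // mulrC.
Qed.
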